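(* Let $\mathsf{X}=\mathbb{R}^d$ with a probability measure $\mu$, let $(\mathsf{Y},\nu)$ be a Polish probability space, let $c:\mathsf{X}\times\mathsf{Y}\to[0,\infty)$ be continuous and differentiable in $x$ with $\nabla_x c$ continuous, let $\pi_\varepsilon$ be the $(c,\varepsilon)$-cyclically invariant coupling for each $\varepsilon>0$ (assumed to exist), and assume $\pi_\varepsilon\to\pi_*$ weakly as $\varepsilon\to0$ for some $\pi_*\in\Pi(\mu,\nu)$; let $\Gamma:=\operatorname{spt}\pi_*$ and $\mathsf{X}_0:=\operatorname{proj}_{\mathsf{X}}\Gamma$. Let $x\in\operatorname{Int}\mathsf{X}_0$ and $y\in\mathsf{Y}$. Let $\pi_*$ be given by a transport map $T:\mathsf{X}_0\to\mathsf{Y}$ (i.e., $\Gamma=\{(x',T(x')):x'\in\mathsf{X}_0\}$) which is continuous at $x$. If $\nabla_x c(x,y)-\nabla_x c(x,T(x))\neq0$, then $I(x,y)>0$.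
   Context: $\Pi(\mu,\nu)$ is the set of couplings of $\mu,\nu$ and $P:=\mu\otimes\nu$. A coupling $\pi$ is $(c,\varepsilon)$-cyclically invariant if $\pi\sim P$ and its density admits a version $\frac{d\pi}{dP}:\mathsf{X}\times\mathsf{Y}\to(0,\infty)$ with $\prod_{i=1}^k\frac{d\pi}{dP}(x_i,y_i)=\exp\big(-\frac1\varepsilon[\sum_{i=1}^k c(x_i,y_i)-\sum_{i=1}^k c(x_i,y_{i+1})]\big)\prod_{i=1}^k\frac{d\pi}{dP}(x_i,y_{i+1})$ for all $k$ and points, $y_{k+1}:=y_1$. The function $I$ is $I(x,y):=\sup_{k\ge2}\sup_{(x_i,y_i)_{i=2}^k\subset\Gamma}\sup_{\sigma\in\Sigma(k)}\sum_{i=1}^k c(x_i,y_i)-\sum_{i=1}^k c(x_i,y_{\sigma(i)})$ with $(x_1,y_1):=(x,y)$ and $\Sigma(k)$ the permutations of $\{1,\dots,k\}$. *)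

From HB Require Import structures.
From mathcomp Require Import all_boot all_order all_algebra all_fingroup.
From mathcomp Require Import all_classical all_reals all_analysis.
Import numFieldNormedType.Exports.
Import Order.TTheory GRing.Theory Num.Theory.

Set Implicit Arguments.
Unset Strict Implicit.
Unset Printing Implicit Defensive.

Local Open Scope classical_set_scope.
Local Open Scope ring_scope.

Definition Borel (T : ptopologicalType) := g_sigma_algebraType (@open T).

Definition separable_space (T : topologicalType) :=
  exists D : set T, countable D /\ closure D = setT.

Definition is_coupling (R : realType) (X Y : ptopologicalType)
  (mu : set (Borel X) -> \bar R) (nu : set (Borel Y) -> \bar R)
  (pi : set (Borel X * Borel Y) -> \bar R) : Prop :=
  (forall A : set (Borel X), measurable A -> pi (A `*` setT) = mu A) /\
  (forall B : set (Borel Y), measurable B -> pi (setT `*` B) = nu B).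

Definition cyclically_invariant (R : realType) (X Y : ptopologicalType)
  (c : X -> Y -> R) (eps : R)
  (mu : set (Borel X) -> \bar R) (nu : set (Borel Y) -> \bar R)
  (pi : set (Borel X * Borel Y) -> \bar R) : Prop :=
  let P := (mu \x nu)%E in
  pi `<< P /\ P `<< pi /\
  exists f : X -> Y -> R,
    (forall x y, 0 < f x y) /\
    measurable_fun setT (fun z : Borel X * Borel Y => f z.1 z.2) /\
    (forall A : set (Borel X * Borel Y), measurable A ->
        pi A = (\int[P]_(z in A) (f z.1 z.2)%:E)%E) /\
    (forall (k : nat) (xs : 'I_k -> X) (ys : 'I_k -> Y),
        \prod_(i < k) f (xs i) (ys i) =
        expR (- eps^-1 * (\sum_(i < k) c (xs i) (ys i)
                          - \sum_(i < k) c (xs i) (ys (ordS i))))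
        * \prod_(i < k) f (xs i) (ys (ordS i))).

Definition spt (R : realType) (X Y : ptopologicalType)
  (pi : set (Borel X * Borel Y) -> \bar R) : set (X * Y) :=
  [set z | forall U : set (X * Y), open U -> U z -> (0 < pi U)%E].

Definition weak_cvg_at0 (R : realType) (X Y : ptopologicalType)
  (pie : R -> set (Borel X * Borel Y) -> \bar R)
  (pistar : set (Borel X * Borel Y) -> \bar R) : Prop :=
  forall f : X * Y -> R, continuous f -> (exists M : R, forall z, `|f z| <= M) ->
    (fun e => \int[pie e]_z (f z)%:E)%E @ 0^'+ --> (\int[pistar]_z (f z)%:E)%E.

Definition gradx (R : realType) (d : nat) (Y : Type)
  (c : 'rV[R]_d -> Y -> R) (x : 'rV[R]_d) (y : Y) : 'rV[R]_d :=
  \row_(i < d) derive (fun z => c z y) x (delta_mx 0 i).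

Definition Ifun (R : realType) (X Y : Type) (c : X -> Y -> R)
  (Gamma : set (X * Y)) (x : X) (y : Y) : \bar R :=
  ereal_sup [set r | exists (k : nat) (xs : 'I_k -> X) (ys : 'I_k -> Y)
                       (s : {perm 'I_k}),
     [/\ (2 <= k)%N,
         (forall i : 'I_k, val i = 0%N -> xs i = x /\ ys i = y),
         (forall i : 'I_k, (0 < val i)%N -> Gamma (xs i, ys i)) &
         r = (\sum_(i < k) c (xs i) (ys i)
              - \sum_(i < k) c (xs i) (ys (s i)))%:E]].

From HB Require Import structures.
From mathcomp Require Import all_boot all_order all_algebra all_fingroup.
From mathcomp Require Import all_classical all_reals all_analysis.
From mathcomp Require Import lra.
Import numFieldNormedType.Exports.
Import Order.TTheory GRing.Theory Num.Theory.

(* Move x along v := grad_x c(x, T x) - grad_x c(x, y) to x' := x + t v, which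
   stays in X0 for small t > 0 because x is interior.  The two-cycle
   (x, y), (x', T x') gains c(x,y) + c(x',T x') - c(x,T x') - c(x',y), which by
   the mean value theorem equals t (<v, grad_x c(z2, T x')> - <v, grad_x c(z1, y)>)
   for some z1, z2 on the segment [x, x'].  As t -> 0 the bracket tends to |v|^2 > 0, by
   continuity of grad_x c and of T at x, so I(x, y) > 0. *)

Local Open Scope classical_set_scope.
Local Open Scope ring_scope.

Definition rowdot {R : pzSemiRingType} {d : nat} (u w : 'rV[R]_d) : R :=
  \sum_(i < d) u 0 i * w 0 i.

Lemma rowdotBr (R : comPzRingType) (d : nat) (u w w' : 'rV[R]_d) :
  rowdot u w - rowdot u w' = rowdot u (w - w').
Proof. by rewrite /rowdot -sumrB; apply: eq_bigr => i _; rewrite !mxE mulrBr. Qed.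

Lemma rowdot_self_gt0 (R : realDomainType) (d : nat) (u : 'rV[R]_d) :
  u != 0 -> 0 < rowdot u u.
Proof.
move=> u_neq0; have [i ui_neq0] : exists i, u 0 i != 0.
  apply/existsP; apply: contraR u_neq0 => /existsPn u0.
  by apply/eqP/rowP => i; rewrite mxE; apply/eqP/negPn.
rewrite /rowdot (bigD1 i) //= ltr_pwDl ?sumr_ge0 // => [|j _].
  by rewrite -expr2 lt_def sqrf_eq0 ui_neq0 sqr_ge0.
by rewrite -expr2 sqr_ge0.
Qed.

Lemma rowdot_continuous {R : realType} {d : nat} {Z : topologicalType}
  (u : 'rV[R]_d) {G : Z -> 'rV[R]_d} :
  continuous G -> continuous (fun p => rowdot u (G p)).
Proof.
move=> cG p.
apply: (@cvg_big R 'I_d +%R 0 xpredT (fun x : R * R => add_continuous x)) => // i _.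
apply: cvgMl_tmp.
exact: continuous_comp (cG p) (@coord_continuous R 1 d 0 i (G p)).
Qed.

Lemma derive_coordE (R : realType) (d : nat) (f : 'rV[R]_d -> R) (p v : 'rV[R]_d) :
  differentiable f p ->
  'D_v f p = rowdot v (\row_(i < d) 'D_(delta_mx 0 i) f p).
Proof.
move=> df; rewrite deriveE // {1}(row_sum_delta v) linear_sum.
by apply: eq_bigr => i _; rewrite linearZ mxE /= deriveE.
Qed.

Lemma is_derive_line {R : realType} {d : nat} {f : 'rV[R]_d -> R}
  {z v : 'rV[R]_d} {s : R} :
  differentiable f (s *: v + z) ->
  is_derive s 1 (fun t : R => f (t *: v + z)) ('D_v f (s *: v + z)).
Proof.
move=> df.
have quotE : (fun h : R => h^-1 *: (f ((h *: 1 + s) *: v + z) - f (s *: v + z)))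
           = (fun h => h^-1 *: (f (h *: v + (s *: v + z)) - f (s *: v + z))).
  by apply/funext => h; rewrite [h *: 1]mulr1 scalerDl addrA.
apply: DeriveDef; rewrite /derivable /derive quotE //.
exact: diff_derivable.
Qed.

Lemma mvt_line {R : realType} {d : nat} {f : 'rV[R]_d -> R}
  (f_diff : forall z, differentiable f z) (x v : 'rV[R]_d) {t : R} :
  0 < t -> exists2 s, s \in `]0, t[ & f (t *: v + x) - f x = t * 'D_v f (s *: v + x).
Proof.
move=> t_gt0.
have f_line := fun s : R => is_derive_line (f_diff (s *: v + x)).
have f_line_cont : {within `[0, t], continuous (fun s : R => f (s *: v + x))}.
  by apply: derivable_within_continuous => s _; have [] := f_line s.
have [s s_in fE] := MVT t_gt0 (fun s _ => f_line s) f_line_cont.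
by exists s => //; rewrite mulrC -[t in RHS]subr0 -fE scale0r add0r.
Qed.

Lemma nbhs_segment {R : realType} {V : normedModType R} {x : V} (v : V) {W : set V} :
  nbhs x W -> exists2 t : R, 0 < t & forall s, 0 <= s <= t -> W (s *: v + x).
Proof.
move=> xW.
have line_cvg : (fun s : R => s *: v + x) @ (0 : R) --> 0 *: v + x.
  by apply: cvgD; [apply: cvgZr_tmp; exact: cvg_id | exact: cvg_cst].
rewrite scale0r add0r in line_cvg.
have /nbhs_ballP[e e_gt0 eW] := line_cvg W xW.
exists (e / 2) => [|s /andP[s_ge0 s_le]]; first by rewrite divr_gt0.
apply: eW; rewrite /ball /= sub0r normrN ger0_norm //.
by apply: le_lt_trans s_le _; rewrite ltr_pdivrMr // ltr_pMr // ltr1n.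
Qed.

Lemma Ifun_ge_swap {R : realType} {X Y : Type} (c : X -> Y -> R)
  {Gamma : set (X * Y)} (x : X) {x' : X} (y : Y) {y' : Y} :
  Gamma (x', y') -> ((c x y + c x' y' - (c x y' + c x' y))%:E <= Ifun c Gamma x y)%E.
Proof.
move=> Gxy'; apply: ereal_sup_ubound.
exists 2%N, (fun i : 'I_2 => if val i == 0%N then x else x'),
  (fun i : 'I_2 => if val i == 0%N then y else y'), (tperm (ord0 : 'I_2) ord_max).
split => //; first by move=> i /= ->.
  by move=> i /= i_gt0; rewrite (gtn_eqF i_gt0).
have liftE : lift ord0 (ord0 : 'I_1) = ord_max :> 'I_2 by apply/val_inj.
by rewrite !big_ord_recl !big_ord0 liftE tpermL tpermR /= !addr0.
Qed.

Section SwapGain.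
Context {R : realType} {d : nat} {Y : topologicalType} {c : 'rV[R]_d -> Y -> R}.
Hypothesis c_diff : forall x y, differentiable (fun z => c z y) x.
Hypothesis gradc_cont : continuous (fun z : 'rV[R]_d * Y => gradx c z.1 z.2).

Lemma derive_gradx (z v : 'rV[R]_d) (w : Y) :
  'D_v (fun z => c z w) z = rowdot v (gradx c z w).
Proof. exact: derive_coordE. Qed.

Lemma swap_gain_mvt (x v : 'rV[R]_d) {t : R} (y y' : Y) : 0 < t ->
  let x' := t *: v + x in
  exists s1 s2, [/\ 0 <= s1 <= t, 0 <= s2 <= t &
    c x y + c x' y' - (c x y' + c x' y)
    = t * (rowdot v (gradx c (s2 *: v + x) y') - rowdot v (gradx c (s1 *: v + x) y))].
Proof.
move=> t_gt0 x'.
have [s1 s1_in E1] := mvt_line (c_diff ^~ y) x v t_gt0.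
have [s2 s2_in E2] := mvt_line (c_diff ^~ y') x v t_gt0.
move: s1_in s2_in; rewrite !in_itv /= => /andP[? ?] /andP[? ?].
exists s1, s2; split; rewrite ?ltW //.
by rewrite mulrBr -!derive_gradx -E1 -E2; lra.
Qed.

Lemma exists_gainful_swap {X0 : set 'rV[R]_d} {T : 'rV[R]_d -> Y} {x : 'rV[R]_d} {y : Y} :
  interior X0 x -> {for x, continuous T} -> gradx c x y != gradx c x (T x) ->
  exists x', X0 x' /\ 0 < c x y + c x' (T x') - (c x (T x') + c x' y).
Proof.
move=> x_int T_cont grad_neq.
set v := gradx c x (T x) - gradx c x y.
pose Phi p := rowdot v (gradx c p.1 p.2).
have Phi_cont : continuous Phi := rowdot_continuous v gradc_cont.
have Phi_y_lt_Tx : Phi (x, y) < Phi (x, T x).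
  by rewrite -subr_gt0 /Phi rowdotBr rowdot_self_gt0 // subr_eq0 eq_sym.
set m := (Phi (x, y) + Phi (x, T x)) / 2.
have [[U1 V1] [/= U1x V1Tx] Phi_gt_m] : \forall p \near (x, T x), m < Phi p.
  by apply: (cvgr_gt _ (Phi_cont (x, T x))); rewrite /m; lra.
have [[U2 V2] [/= U2x V2y] Phi_lt_m] : \forall p \near (x, y), Phi p < m.
  by apply: (cvgr_lt _ (Phi_cont (x, y))); rewrite /m; lra.
have V1T : nbhs x (T @^-1` V1) := T_cont V1 V1Tx.
set W := U1 `&` U2 `&` X0 `&` T @^-1` V1.
have [t t_gt0 inW] : exists2 t : R, 0 < t & forall s, 0 <= s <= t -> W (s *: v + x).
  by apply: nbhs_segment; do 3 apply: filterI => //.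
set x' := t *: v + x.
have [[[_ _] X0x'] V1Tx'] : W x' by apply: inW; rewrite lexx ltW.
exists x'; split => //.
have [s1 [s2 [s1_in s2_in ->]]] := swap_gain_mvt x v y (T x') t_gt0.
have [[[_ U2s1] _] _] := inW s1 s1_in.
have [[[U1s2 _] _] _] := inW s2 s2_in.
rewrite mulr_gt0 // subr_gt0 (@lt_trans _ _ m) //.
  by apply: (Phi_lt_m (_, y)); split => //; exact: nbhs_singleton.
by apply: (Phi_gt_m (_, T x')).
Qed.

End SwapGain.

Theorem lemma5p2 (R : realType) (d : nat)
  (Y : completePseudoMetricType R)
  (HYhaus : hausdorff_space Y) (HYsep : separable_space Y)
  (mu : probability (Borel 'rV[R]_d) R) (nu : probability (Borel Y) R)
  (c : 'rV[R]_d -> Y -> R)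
  (c_ge0 : forall x y, 0 <= c x y)
  (c_cont : continuous (fun z : 'rV[R]_d * Y => c z.1 z.2))
  (c_diff : forall x y, differentiable (fun z => c z y) x)
  (gradc_cont : continuous (fun z : 'rV[R]_d * Y => gradx c z.1 z.2))
  (pie : R -> probability (Borel 'rV[R]_d * Borel Y)%type R)
  (Hpie : forall eps : R, 0 < eps ->
     is_coupling mu nu (pie eps) /\ cyclically_invariant c eps mu nu (pie eps))
  (pistar : probability (Borel 'rV[R]_d * Borel Y)%type R)
  (Hstar : is_coupling mu nu pistar)
  (Hweak : weak_cvg_at0 pie pistar)
  (T : 'rV[R]_d -> Y) (x : 'rV[R]_d) (y : Y)
  (Hx : interior (fst @` spt pistar) x)
  (HT : spt pistar = [set z | (fst @` spt pistar) z.1 /\ z.2 = T z.1])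
  (HTcont : {for x, continuous T})
  (Hgrad : gradx c x y != gradx c x (T x)) :
  (0 < Ifun c (spt pistar) x y)%E.
Proof.
have [x' [X0x' gain_gt0]] := exists_gainful_swap c_diff gradc_cont Hx HTcont Hgrad.
have graph_x' : spt pistar (x', T x') by rewrite HT.
by apply: lt_le_trans (Ifun_ge_swap c x y graph_x'); rewrite lte_fin.
Qed.
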